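(* Let $(X,\le,\ast)$ be a semiframe and let $x\in X$ with $x\neq\bot_X$. The following are equivalent: (1) $x$ is transitive; (2) $x^\ast$ is a completely prime semifilter (an abstract point); (3) $x^\ast$ is a semifilter; (4) $x^\ast$ is compatible; (5) $x^\ast$ is a maximal semifilter.
   Context: A semiframe is a triple $(X,\le,\ast)$ where $(X,\le)$ is a complete join-semilattice (every subset $Y$ has a join $\bigvee Y$; $\bot_X=\bigvee\varnothing$, $\top_X=\bigvee X$) and $\ast\subseteq X\times X$ is a compatibility relation: commutative; $x\ast x$ for every $x\neq\bot_X$; and $x\ast\bigvee Y$ iff $x\ast y$ for some $y\in Y$. A subset $F\subseteq X$ is compatible when $y\ast y'$ for all $y,y'\in F$; up-closed when $y\in F$, $y\le y'$ imply $y'\in F$; a semifilter is a nonempty up-closed compatible subset; it is completely prime when for every (possibly empty) $Y\subseteq X$, $\bigvee Y\in F$ implies $y\in F$ for some $y\in Y$; it is maximal when contained in no strictly larger semifilter. An abstract point is a completely prime semifilter. $x^\ast=\{x'\in X\mid x'\ast x\}$. An element $x$ is transitive when $x\neq\bot_X$ and for all $x',x''$, $x'\ast x$ and $x\ast x''$ imply $x'\ast x''$. *)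

Section Semiframes.
Context {X : Type} (le : X -> X -> Prop) (join : (X -> Prop) -> X)
        (cmp : X -> X -> Prop).

Definition bot : X := join (fun _ => False).
Definition top : X := join (fun _ => True).

Definition complete_join_semilattice : Prop :=
  (forall x, le x x) /\
  (forall x y z, le x y -> le y z -> le x z) /\
  (forall x y, le x y -> le y x -> x = y) /\
  (forall (Y : X -> Prop) y, Y y -> le y (join Y)) /\
  (forall (Y : X -> Prop) z, (forall y, Y y -> le y z) -> le (join Y) z).

Definition semiframe : Prop :=
  complete_join_semilattice /\
  (forall x y, cmp x y -> cmp y x) /\
  (forall x, x <> bot -> cmp x x) /\
  (forall x (Y : X -> Prop), cmp x (join Y) <-> exists y, Y y /\ cmp x y).

Definition compatible (F : X -> Prop) : Prop :=
  forall y y', F y -> F y' -> cmp y y'.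

Definition up_closed (F : X -> Prop) : Prop :=
  forall y y', F y -> le y y' -> F y'.

Definition semifilter (F : X -> Prop) : Prop :=
  (exists y, F y) /\ up_closed F /\ compatible F.

Definition completely_prime (F : X -> Prop) : Prop :=
  forall Y : X -> Prop, F (join Y) -> exists y, Y y /\ F y.

Definition abstract_point (F : X -> Prop) : Prop :=
  semifilter F /\ completely_prime F.

Definition maximal_semifilter (F : X -> Prop) : Prop :=
  semifilter F /\
  forall G : X -> Prop, semifilter G -> (forall y, F y -> G y) ->
    ~ (exists y, G y /\ ~ F y).

Definition star (x : X) : X -> Prop := fun x' => cmp x' x.

Definition transitive_elt (x : X) : Prop :=
  x <> bot /\ forall x' x'', cmp x' x -> cmp x x'' -> cmp x' x''.

End Semiframes.


(* The join axiom [x * \/Y <-> exists y in Y, x * y] makes [x^*] up-closed and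
   completely prime for every [x], and [x] lies in [x^*] when [x <> bot]; so
   [x^*] is an abstract point, a semifilter, or even a maximal one exactly when
   it is compatible, and compatibility of [x^*] is a restatement of transitivity
   of [x]. Maximality holds because any semifilter containing [x^*] contains [x],
   hence consists of elements compatible with [x]. *)

Section Semiframe.
Context {X : Type} (le : X -> X -> Prop) (join : (X -> Prop) -> X)
        (cmp : X -> X -> Prop).
Hypothesis HS : semiframe le join cmp.

Lemma cmp_sym (y z : X) : cmp y z -> cmp z y.
Proof. destruct HS as [_ [Hsym _]]. apply Hsym. Qed.

Lemma cmp_join (y : X) (Y : X -> Prop) : cmp y (join Y) <-> exists z, Y z /\ cmp y z.
Proof. destruct HS as [_ [_ [_ Hjoin]]]. apply Hjoin. Qed.

(* [z] is the join of the pair [{y, z}], and compatibility with a join is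
   compatibility with one of the joinands. *)
Lemma cmp_le_r (w y z : X) : cmp w y -> le y z -> cmp w z.
Proof.
  intros Hwy Hyz.
  destruct HS as [[Hrefl [_ [Hanti [Hub Hlub]]]] _].
  assert (Hpair : join (fun v => v = y \/ v = z) = z).
  { apply Hanti.
    - apply Hlub. intros v [-> | ->]; auto.
    - apply Hub. auto. }
  rewrite <- Hpair. apply cmp_join. exists y. auto.
Qed.

Lemma star_up_closed (x : X) : up_closed le (star cmp x).
Proof.
  intros y y' Hy Hle. apply cmp_sym, (cmp_le_r x y y'); auto. apply cmp_sym, Hy.
Qed.

Lemma star_completely_prime (x : X) : completely_prime join (star cmp x).
Proof.
  intros Y HY. apply cmp_sym, cmp_join in HY. destruct HY as [y [Hy Hxy]].
  exists y. split; [exact Hy | apply cmp_sym, Hxy].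
Qed.

Lemma star_self (x : X) : x <> bot join -> star cmp x x.
Proof. destruct HS as [_ [_ [Hrefl _]]]. apply Hrefl. Qed.

Lemma semifilter_star (x : X) :
  x <> bot join -> compatible cmp (star cmp x) -> semifilter le cmp (star cmp x).
Proof.
  intros hx Hcomp. split; [exists x; apply star_self, hx | split].
  - apply star_up_closed.
  - exact Hcomp.
Qed.

Lemma semifilter_sub_star (G : X -> Prop) (x : X) :
  semifilter le cmp G -> G x -> forall y, G y -> star cmp x y.
Proof. intros [_ [_ HG]] Gx y Gy. apply HG; assumption. Qed.

Lemma maximal_semifilter_star (x : X) :
  x <> bot join -> compatible cmp (star cmp x) ->
  maximal_semifilter le cmp (star cmp x).
Proof.
  intros hx Hcomp. split; [apply semifilter_star; assumption |].
  intros G HG Hsub [y [Gy Hy]].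
  apply Hy, (semifilter_sub_star G x HG); [apply Hsub, star_self, hx | exact Gy].
Qed.

Lemma transitive_elt_compatible_star (x : X) :
  x <> bot join -> transitive_elt join cmp x <-> compatible cmp (star cmp x).
Proof.
  intros hx. split.
  - intros [_ Htr] y y' Hy Hy'. apply Htr; [exact Hy | apply cmp_sym, Hy'].
  - intros Hcomp. split; [exact hx |].
    intros y z Hyx Hxz. apply Hcomp; [exact Hyx | apply cmp_sym, Hxz].
Qed.

End Semiframe.

Theorem proposition9p9 (X : Type) (le : X -> X -> Prop)
  (join : (X -> Prop) -> X) (cmp : X -> X -> Prop)
  (HS : semiframe le join cmp) (x : X) (hx : x <> bot join) :
  (transitive_elt join cmp x <-> abstract_point le join cmp (star cmp x)) /\
  (transitive_elt join cmp x <-> semifilter le cmp (star cmp x)) /\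
  (transitive_elt join cmp x <-> compatible cmp (star cmp x)) /\
  (transitive_elt join cmp x <-> maximal_semifilter le cmp (star cmp x)).
Proof.
  pose proof (transitive_elt_compatible_star _ _ _ HS x hx) as Htc.
  pose proof (semifilter_star _ _ _ HS x hx) as Hsf.
  pose proof (maximal_semifilter_star _ _ _ HS x hx) as Hmax.
  pose proof (star_completely_prime _ _ _ HS x) as Hcp.
  split; [| split; [| split]]; split; intros H.
  - split; [apply Hsf, Htc, H | exact Hcp].
  - destruct H as [[_ [_ Hcomp]] _]. apply Htc, Hcomp.
  - apply Hsf, Htc, H.
  - destruct H as [_ [_ Hcomp]]. apply Htc, Hcomp.
  - apply Htc, H.
  - apply Htc, H.
  - apply Hmax, Htc, H.
  - destruct H as [[_ [_ Hcomp]] _]. apply Htc, Hcomp.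
Qed.
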